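(* Let $e=(B,X,M,A,X)$ be an idempotent of $\mathbb M$ with $e\notin\{\mathbf0,\mathbf1\}$, let $(B,X)[\overline z]$ be a reachable term of $\overline{\mathcal G}$, and let $z_e\in\overline I^*$ with $\varphi(z_e)=e$. Then $L_\emptyset((B,X)[z_e\overline z])\subseteq\ \downarrow L_\emptyset((B,X)[\overline z])$.
   Context: Let $\mathcal{G}=(N,T,I,P,S)$ be an indexed grammar: $N$ (non-terminals), $T$ (terminals), $I$ (stack symbols) finite pairwise disjoint alphabets, $S\in N$, and productions of the forms $A\to w$ ($w\in T^*$), $A\to BC$, $A\to Bf$, $Af\to B$ ($A,B,C\in N$, $f\in I$). Terms $A[z]$ ($A\in N$, $z\in I^*$ the stack, top on the left; $A$ means $A[\varepsilon]$); sentential forms are words over terms and terminals; derivation: $uA[z]v\Rightarrow uB[z]C[z]v$ if $A\to BC\in P$; $uA[z]v\Rightarrow uB[fz]v$ if $A\to Bf\in P$; $uA[fz]v\Rightarrow uB[z]v$ if $Af\to B\in P$; $uA[z]v\Rightarrow uwv$ if $A\to w\in P$, $w\in T^*$; $\Rightarrow^*$ is the reflexive transitive closure; $\downarrow L$ is the set of scattered subwords of words in $L$. For $X\subseteq N$, $z\in I^*$: $z\cdot X=\{A\in N:\exists u\in(X\cup T)^*, A[z]\Rightarrow^*u\}$ (non-terminals in $u$ with empty stack); $\mathrm{Useful}=\{A:\exists w\in T^*, A\Rightarrow^*w\}$; assume $S\in\mathrm{Useful}$. The annotated version $\overline{\mathcal G}$ has non-terminals $\overline N=\{(A,X)\in N\times2^N:A\in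 X\}$, stack symbols $\overline I=I\times 2^N$, start $(S,\mathrm{Useful})$, and productions: $(A,X)\to w$ for $A\to w\in P$, $A\in X$; $(A,X)\to(B,X)(C,X)$ for $A\to BC\in P$, $A,B,C\in X$; $(A,X)\to(B,Y)(f,X)$ for $A\to Bf\in P$ with $Y=f\cdot X$, $A\in X$, $B\in Y$; $(A,Y)(f,X)\to(B,X)$ for $Af\to B\in P$ with $Y=f\cdot X$, $A\in Y$, $B\in X$. A term of $\overline{\mathcal G}$ is reachable if it occurs in some sentential form $u$ with $(S,\mathrm{Useful})\Rightarrow^*_{\overline{\mathcal G}}u$. For a sentential form $u$ of $\overline{\mathcal G}$, $L_\emptyset(u)=\{w\in T^*:u\Rightarrow^*_{\overline{\mathcal G}}w\}$. Assume every $f\in I$ occurs in some production $A\to Bf$ and there are functions $\alpha,\beta:I\to N$ such that every production $A\to Bf$ in $P$ satisfies $A=\alpha(f)$, $B=\beta(f)$. For $X\subseteq N$, $A\,\mathcal R_X\,B$ holds iff $A,B\in X$ and $(A,X)\Rightarrow^*_{\overline{\mathcal G}}u\,(B,X)\,v$ for some sentential forms $u,v$ of $\overline{\mathcal G}$. The stack monoid $\mathbb M$ has elements: all tuples $(B,Y,M,A,X)$ with $A,B\in N$, $X,Y\subseteq N$, $M\in\mathbb B^{N\times N}$ (Boolean matrices, product over $(\vee,\wedge)$), plus a neutral element $\mathbf 1$ and an absorbing element $\mathbf 0$; product $(B_2,Y_2,M_2,A_2,X_2)\cdot(B_1,Y_1,M_1,A_1,X_1)=(B_2,Y_2,M_1M_2,A_1,X_1)$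 if $X_2=Y_1$ and $B_1\,\mathcal R_{X_2}\,A_2$, and $\mathbf 0$ otherwise. $\varphi:\overline I^*\to\mathbb M$ is the monoid morphism with $\varphi(f,X)=(\beta(f),f\cdot X,M_{f,X},\alpha(f),X)$, where $M_{f,X}(A,B)=\top$ iff $A[f]\Rightarrow^*_{\mathcal G}uBv$ for some $u,v\in(X\cup T)^*$. An element $e$ is idempotent if $e\cdot e=e$. *)

From mathcomp Require Import all_boot.
From Stdlib Require Import ClassicalEpsilon.
Set Implicit Arguments.
Unset Strict Implicit.
Unset Printing Implicit Defensive.

Definition pb (Q : Prop) : bool :=
  if excluded_middle_informative Q then true else false.

(* Productions over non-terminals Nt, terminals Te, stack symbols St:
   PT A w      :  A -> w         (w in Te^* )
   PB A B C    :  A -> B C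
   PPush A B f :  A -> B f
   PPop A f B  :  A f -> B                                                  *)
Inductive prod (Nt Te St : Type) :=
| PT of Nt & seq Te
| PB of Nt & Nt & Nt
| PPush of Nt & Nt & St
| PPop of Nt & St & Nt.

(* Symbols of sentential forms: terms A[z] (top of stack on the left) or terminals. *)
Inductive sym (Nt Te St : Type) :=
| STerm of Nt & seq St
| SLet of Te.

Arguments PT {Nt Te St}. Arguments PB {Nt Te St}.
Arguments PPush {Nt Te St}. Arguments PPop {Nt Te St}.
Arguments STerm {Nt Te St}. Arguments SLet {Nt Te St}.

Section Derivation.
Variables (Nt Te St : Type) (P : prod Nt Te St -> Prop).

Inductive step : seq (sym Nt Te St) -> seq (sym Nt Te St) -> Prop :=
| stepB u v A B C z : P (PB A B C) ->
    step (u ++ STerm A z :: v) (u ++ STerm B z :: STerm C z :: v)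
| stepPush u v A B f z : P (PPush A B f) ->
    step (u ++ STerm A z :: v) (u ++ STerm B (f :: z) :: v)
| stepPop u v A B f z : P (PPop A f B) ->
    step (u ++ STerm A (f :: z) :: v) (u ++ STerm B z :: v)
| stepT u v A w z : P (PT A w) ->
    step (u ++ STerm A z :: v) (u ++ map SLet w ++ v).

Inductive derives : seq (sym Nt Te St) -> seq (sym Nt Te St) -> Prop :=
| der_refl u : derives u u
| der_step u v w : step u v -> derives v w -> derives u w.

End Derivation.

Section Annotated.
Variables (N T I : finType) (P : prod N T I -> Prop).

Definition okX (X : {set N}) (s : sym N T I) : Prop :=
  match s with
  | SLet _ => True
  | STerm C z => z = [::] /\ C \in X
  end.

Definition dotX (z : seq I) (X : {set N}) : {set N} :=
  [set A | pb (exists u, derives P [:: STerm A z] u /\ List.Forall (okX X) u)].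

Definition Useful (A : N) : Prop :=
  exists w : seq T, derives P [:: STerm A [::]] (map SLet w).

Definition UsefulSet : {set N} := [set A | pb (Useful A)].

Definition Pbar (p : prod (N * {set N}) T (I * {set N})) : Prop :=
  match p with
  | PT AX w => P (PT AX.1 w) /\ AX.1 \in AX.2
  | PB AX BX CX =>
      BX.2 = AX.2 /\ CX.2 = AX.2 /\ P (PB AX.1 BX.1 CX.1) /\
      AX.1 \in AX.2 /\ BX.1 \in AX.2 /\ CX.1 \in AX.2
  | PPush AX BY fX =>
      fX.2 = AX.2 /\ BY.2 = dotX [:: fX.1] AX.2 /\ P (PPush AX.1 BY.1 fX.1) /\
      AX.1 \in AX.2 /\ BY.1 \in BY.2
  | PPop AY fX BX =>
      BX.2 = fX.2 /\ AY.2 = dotX [:: fX.1] fX.2 /\ P (PPop AY.1 fX.1 BX.1) /\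
      AY.1 \in AY.2 /\ BX.1 \in fX.2
  end.

Definition asym := sym (N * {set N}) T (I * {set N}).

Definition reachable (S : N) (t : asym) : Prop :=
  exists u v, derives Pbar [:: STerm (S, UsefulSet) [::]] (u ++ t :: v).

Definition Lang (u : seq asym) (w : seq T) : Prop :=
  derives Pbar u (map SLet w).

Definition Rrel (X : {set N}) (A B : N) : Prop :=
  A \in X /\ B \in X /\
  exists u v, derives Pbar [:: STerm (A, X) [::]] (u ++ STerm (B, X) [::] :: v).

Definition bmat := {ffun N * N -> bool}.
Definition bmul (M1 M2 : bmat) : bmat :=
  [ffun p : N * N => [exists k : N, M1 (p.1, k) && M2 (k, p.2)]].

Inductive mon :=
| MOne
| MZero
| MElt of N & {set N} & bmat & N & {set N}.

Definition mmul (a b : mon) : mon :=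
  match a, b with
  | MOne, _ => b
  | _, MOne => a
  | MZero, _ => MZero
  | _, MZero => MZero
  | MElt B2 Y2 M2 A2 X2, MElt B1 Y1 M1 A1 X1 =>
      if (X2 == Y1) && pb (Rrel X2 B1 A2) then MElt B2 Y2 (bmul M1 M2) A1 X1
      else MZero
  end.

Definition mon_idem (e : mon) : Prop := mmul e e = e.

Definition Mfx (f : I) (X : {set N}) : bmat :=
  [ffun p : N * N => pb (exists u v,
     derives P [:: STerm p.1 [:: f]] (u ++ STerm p.2 [::] :: v) /\
     List.Forall (okX X) u /\ List.Forall (okX X) v)].

Variables (alpha beta : I -> N).

Definition phi1 (fX : I * {set N}) : mon :=
  MElt (beta fX.1) (dotX [:: fX.1] fX.2) (Mfx fX.1 fX.2) (alpha fX.1) fX.2.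

Definition phi (z : seq (I * {set N})) : mon := foldr mmul MOne (map phi1 z).

End Annotated.

From mathcomp Require Import all_boot.
From Stdlib Require Import ClassicalEpsilon.
Set Implicit Arguments.
Unset Strict Implicit.
Unset Printing Implicit Defensive.

(** As [e * e <> 0], [B R_X A]: [(B,X) =>* u (A,X) v]. As [phi z_e = e], the
   pushes [alpha f -> beta f f] for the letters of [z_e], glued together by the
   relations [R] that the monoid product demands between consecutive letters,
   give [(A,X)[zbar] =>* x (B,X)[z_e zbar] y]. All terms of [u], [v], [x], [y]
   (lifted over [zbar]) are productive: a non-terminal [D] belonging to the
   annotation [z . Y] of its stack derives, by definition of [z . Y], a form
   whose terms lie in [Y] with empty stack, this derivation tree lifts to the
   annotated grammar, and the terms [(E,Y)[zbar]] it ends in are productive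
   because [(B,X)[zbar]] is reachable from [(S, Useful)]. So every word [w] of
   [(B,X)[z_e zbar]] sits inside a word [w_L w w_R] of [(B,X)[zbar]]. *)

Section Derivations.
Variables (Nt Te St : Type) (R : prod Nt Te St -> Prop).
Local Notation sy := (sym Nt Te St).

Lemma derives_trans (u v w : seq sy) : derives R u v -> derives R v w -> derives R u w.
Proof. by elim=> // a b c Hab _ IH /IH; apply: der_step. Qed.

Lemma derives1 (u v : seq sy) : step R u v -> derives R u v.
Proof. by move=> Huv; apply: der_step Huv (der_refl _ _). Qed.

Lemma step_frame (x y u v : seq sy) : step R u v -> step R (x ++ u ++ y) (x ++ v ++ y).
Proof. by case=> u0 v0 * ; rewrite -!catA /= !(catA x u0); constructor. Qed.

Lemma derives_frame (x y u v : seq sy) :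
  derives R u v -> derives R (x ++ u ++ y) (x ++ v ++ y).
Proof.
elim=> [a|a b c Hab _ IH]; first exact: der_refl.
exact: der_step (step_frame x y Hab) IH.
Qed.

Lemma derives_cat (u1 v1 u2 v2 : seq sy) :
  derives R u1 v1 -> derives R u2 v2 -> derives R (u1 ++ u2) (v1 ++ v2).
Proof.
move=> D1 D2; apply: (@derives_trans _ (v1 ++ u2)).
  by have := derives_frame [::] u2 D1.
by have := derives_frame v1 [::] D2; rewrite !cats0.
Qed.

Lemma derives_Forall (Q : sy -> Prop) (u : seq sy) :
  List.Forall (fun t => exists2 v, derives R [:: t] v & List.Forall Q v) u ->
  exists2 v, derives R u v & List.Forall Q v.
Proof.
elim=> [|t {}u [v1 D1 F1] _ [v2 D2 F2]]; first by exists [::]; constructor.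
by exists (v1 ++ v2); [apply: (derives_cat D1 D2) | apply/List.Forall_app].
Qed.

Definition lift_sym (s : seq St) (t : sy) : sy :=
  if t is STerm A z then STerm A (z ++ s) else t.
Definition lift s (u : seq sy) := map (lift_sym s) u.

Lemma lift_letters s w : lift s (map SLet w) = map SLet w.
Proof. by elim: w => //= a w ->. Qed.

Lemma step_lift s (u v : seq sy) : step R u v -> step R (lift s u) (lift s v).
Proof.
rewrite /lift; case=> u0 v0 * ; rewrite !map_cat /=; try by constructor.
by rewrite -/(lift s (map SLet _)) lift_letters; constructor.
Qed.

Lemma derives_lift s (u v : seq sy) : derives R u v -> derives R (lift s u) (lift s v).
Proof.
elim=> [a|a b c Hab _ IH]; first exact: der_refl.
exact: der_step (step_lift s Hab) IH.
Qed.

Definition is_letter (t : sy) := exists a, t = SLet a.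

Lemma Forall_is_letter (v : seq sy) :
  List.Forall is_letter v <-> exists w, v = map SLet w.
Proof.
split; last by case=> w ->; elim: w => //= a w IH; constructor => //; exists a.
by elim=> [|_ {}v [a ->] _ [w ->]]; [exists [::] | exists (a :: w)].
Qed.

Definition productive (t : sy) := exists w, derives R [:: t] (map SLet w).

Lemma productive_letter a : productive (SLet a).
Proof. by exists [:: a]; apply: der_refl. Qed.

Lemma productive_seq (u : seq sy) :
  List.Forall productive u -> exists w, derives R u (map SLet w).
Proof.
move=> Pu; have [|v Duv /Forall_is_letter [w Ev]] := @derives_Forall is_letter u.
  apply: List.Forall_impl Pu => t [w Dw].
  by exists (map SLet w) => //; apply/Forall_is_letter; exists w.
by exists w; rewrite -Ev.
Qed.

Definition embeds (t t' : sy) :=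
  exists x y, [/\ derives R [:: t] (x ++ t' :: y),
                  List.Forall productive x & List.Forall productive y].

Lemma embeds_trans (t1 t2 t3 : sy) : embeds t1 t2 -> embeds t2 t3 -> embeds t1 t3.
Proof.
move=> [x1 [y1 [D1 Px1 Py1]]] [x2 [y2 [D2 Px2 Py2]]].
exists (x1 ++ x2), (y2 ++ y1); split; try by apply/List.Forall_app.
apply: (derives_trans D1); have := derives_frame x1 y1 D2.
by rewrite -!catA.
Qed.

Lemma embeds_step (t t' : sy) : step R [:: t] [:: t'] -> embeds t t'.
Proof. by move=> Htt'; exists [::], [::]; split; [apply: derives1 | |]. Qed.

End Derivations.

Lemma embeds_subseq (Nt : Type) (Te : eqType) (St : Type) (R : prod Nt Te St -> Prop)
  (t t' : sym Nt Te St) (w : seq Te) :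
  embeds R t t' -> derives R [:: t'] (map SLet w) ->
  exists2 w', derives R [:: t] (map SLet w') & subseq w w'.
Proof.
move=> [x [y [D Px Py]]] Dw.
have [wx Dx] := productive_seq Px; have [wy Dy] := productive_seq Py.
exists (wx ++ w ++ wy); last exact: subseq_trans (prefix_subseq w wy) (suffix_subseq wx _).
apply: (derives_trans D); rewrite !map_cat -cat1s.
exact: derives_cat Dx (derives_cat Dw Dy).
Qed.

Lemma pbP (Q : Prop) : reflect Q (pb Q).
Proof. by rewrite /pb; case: excluded_middle_informative => HQ; constructor. Qed.

Section DerivationTrees.
Variables (N T I : finType) (P : prod N T I -> Prop).
Local Notation gsym := (sym N T I).

(* Derivation trees of [D[z]] whose unexpanded leaves all satisfy [L]. *)
Inductive gtree (L : N -> seq I -> Prop) : N -> seq I -> Prop :=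
| gtree_leaf D z : L D z -> gtree L D z
| gtree_T D z w : P (PT D w) -> gtree L D z
| gtree_B D E F z : P (PB D E F) -> gtree L E z -> gtree L F z -> gtree L D z
| gtree_push D E f z : P (PPush D E f) -> gtree L E (f :: z) -> gtree L D z
| gtree_pop D f E z : P (PPop D f E) -> gtree L E z -> gtree L D (f :: z).

Definition term_in (L : N -> seq I -> Prop) (t : gsym) : Prop :=
  if t is STerm E z then L E z else True.
Definition term_gtree L (t : gsym) : Prop :=
  if t is STerm D z then gtree L D z else True.

Definition leafX (Y : {set N}) E (z : seq I) := z = [::] /\ E \in Y.

Lemma term_in_sub (L1 L2 : N -> seq I -> Prop) (u : seq gsym) :
  (forall E z, L1 E z -> L2 E z) ->
  List.Forall (term_in L1) u -> List.Forall (term_in L2) u.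
Proof. by move=> L12; apply: List.Forall_impl; case=> //= E z /L12. Qed.

Lemma derives_gtree L (u v : seq gsym) : derives P u v ->
  List.Forall (term_in L) v -> List.Forall (term_gtree L) u.
Proof.
elim=> [a|a b c Hab _ IH /IH {IH}].
  by apply: List.Forall_impl; case=> //= D z; apply: gtree_leaf.
case: Hab => u0 v0 A > HP /List.Forall_app [Fu0 Fv]; apply/List.Forall_app;
  split => //; last by move/List.Forall_app: Fv => [_ ?]; constructor => //; apply: gtree_T HP.
all: inversion_clear Fv as [|? ? G1 F1]; constructor => //.
- by inversion_clear F1; apply: gtree_B HP G1 _.
- by inversion_clear F1.
- exact: gtree_push HP G1.
- exact: gtree_pop HP G1.
Qed.

Lemma gtree_derives L D z : gtree L D z ->
  exists2 u, derives P [:: STerm D z] u & List.Forall (term_in L) u.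
Proof.
elim=> {D z} [D z HL|D z w HP|D E F z HP _ [u1 D1 F1] _ [u2 D2 F2]|
              D E f z HP _ [u1 D1 F1]|D f E z HP _ [u1 D1 F1]].
- by exists [:: STerm D z]; [apply: der_refl | constructor].
- exists (map SLet w); first by apply/derives1; have := stepT [::] [::] z HP; rewrite cats0.
  by elim: w {HP} => //= a w IH; constructor.
- exists (u1 ++ u2); last by apply/List.Forall_app.
  apply: der_step (derives_cat D1 D2 (u1 := [:: _]) (u2 := [:: _])).
  exact: (stepB [::] [::] z HP).
- by exists u1 => //; apply: der_step D1; apply: (stepPush [::] [::] z HP).
- by exists u1 => //; apply: der_step D1; apply: (stepPop [::] [::] z HP).
Qed.

Section Cut.
Variables (L : N -> seq I -> Prop) (z0 : seq I).
Hypothesis L_bottom : forall E z, L E z -> z = [::].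

Definition cut_leaf E (z : seq I) := z = [::] /\ gtree L E z0.

Lemma gtree_cut D z : gtree L D (z ++ z0) -> gtree cut_leaf D z.
Proof.
move Ezz: (z ++ z0) => zz G; elim: G z Ezz => {D zz}
  [D zz HL|D zz w HP|D E F zz HP _ IHE _ IHF|D E f zz HP _ IHE|D f E zz HP GE IHE] z Ez.
- subst zz; move/L_bottom: (HL) => /(congr1 size) /eqP.
  rewrite size_cat addn_eq0 !size_eq0 => /andP [/eqP Ez _]; subst z.
  by apply: gtree_leaf; split; last by apply: gtree_leaf.
- exact: gtree_T HP.
- exact: gtree_B HP (IHE _ Ez) (IHF _ Ez).
- by apply: gtree_push HP (IHE (f :: z) _); rewrite -Ez.
- case: z Ez => [|g z] /= Ez; last by case: Ez => -> /IHE; apply: gtree_pop HP.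
  by apply: gtree_leaf; split => //; rewrite Ez; apply: gtree_pop HP GE.
Qed.

Lemma gtree_glue D z : gtree cut_leaf D z -> gtree L D (z ++ z0).
Proof.
elim=> {D z} [D z [-> G] //|D z w HP|D E F z HP _ G1 _ G2|D E f z HP _ G1|D f E z HP _ G1].
- exact: gtree_T HP.
- exact: gtree_B HP G1 G2.
- exact: gtree_push HP G1.
- exact: gtree_pop HP G1.
Qed.

End Cut.

(* [z . Y] computed one letter at a time, as the annotated grammar does, and the
   corresponding annotated stack. *)
Fixpoint dotl (z : seq I) (Y : {set N}) : {set N} :=
  if z is h :: z' then dotX P [:: h] (dotl z' Y) else Y.
Fixpoint annot (z : seq I) (Y : {set N}) : seq (I * {set N}) :=
  if z is h :: z' then (h, dotl z' Y) :: annot z' Y else [::].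

Definition dot_closed (Y : {set N}) := dotX P [::] Y \subset Y.

Lemma gtree_mem_dotl L (Y : {set N}) :
  (forall E z, L E z -> leafX Y E z) -> dot_closed Y ->
  forall z D, gtree L D z -> D \in dotl z Y.
Proof.
move=> LY /subsetP cY; elim=> [|h z IH] D G /=.
  have [u Du Fu] := gtree_derives G; apply/cY; rewrite inE.
  by apply/pbP; exists u; split => //; apply: term_in_sub Fu.
have [|u Du Fu] := gtree_derives (gtree_cut (z := [:: h]) _ G).
  by move=> E zz /LY [].
rewrite inE; apply/pbP; exists u; split => //.
by apply: term_in_sub Fu => E zz [-> GE]; split => //; apply: IH.
Qed.

Lemma dotl_gtree (Y : {set N}) z D : D \in dotl z Y -> gtree (leafX Y) D z.
Proof.
elim: z D => [|h z IH] D /=; first by move=> HD; apply: gtree_leaf.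
rewrite inE => /pbP [u [Du Fu]].
have Fu' : List.Forall (term_in (cut_leaf (leafX Y) z)) u.
  by apply: term_in_sub Fu => E zz [-> HE]; split => //; apply: IH.
have G := List.Forall_inv (derives_gtree Du Fu').
by apply: (gtree_glue (z := [:: h])) G => E zz [].
Qed.

Lemma dot_closed_dotX h Y : dot_closed (dotX P [:: h] Y).
Proof.
apply/subsetP => D; rewrite !inE => /pbP [u [Du Fu]]; apply/pbP.
have Dl := derives_lift [:: h] Du.
have [|v Dv Fv] := @derives_Forall _ _ _ P (okX Y) (lift [:: h] u).
  elim: Fu {Du Dl} => [|[E zz|a] {}u Ft _ IH] /=; constructor => //.
    by move: Ft => [-> /[!inE] /pbP [v [Dv Fv]]]; exists v.
  by exists [:: SLet a]; [apply: der_refl | constructor].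
by exists v; split => //; apply: derives_trans Dl Dv.
Qed.

Lemma dot_closed_dotl Y z : dot_closed Y -> dot_closed (dotl z Y).
Proof. by case: z => //= h z _; apply: dot_closed_dotX. Qed.

Lemma dot_closed_Useful : dot_closed (UsefulSet P).
Proof.
apply/subsetP => D; rewrite !inE => /pbP [u [Du Fu]]; apply/pbP.
have [|v Dv /Forall_is_letter [w Ev]] := @derives_Forall _ _ _ P (@is_letter _ _ _) u.
  apply: List.Forall_impl Fu => -[E zz [-> /[!inE] /pbP [w Dw]]|a _].
    by exists (map SLet w) => //; apply/Forall_is_letter; exists w.
  by exists [:: SLet a]; [apply: der_refl | constructor; [exists a|]].
by exists w; rewrite -Ev; apply: derives_trans Du Dv.
Qed.

End DerivationTrees.

Section AnnotatedGrammar.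
Variables (N T I : finType) (P : prod N T I -> Prop).
Local Notation asym := (asym N T I).
Local Notation productive := (productive (Pbar P)).

Lemma gtree_productive (Y : {set N}) (rest : seq (I * {set N})) (L : N -> seq I -> Prop) :
  (forall E z, L E z -> leafX Y E z /\ productive (STerm (E, Y) rest)) ->
  dot_closed P Y ->
  forall D z, gtree P L D z ->
  productive (STerm (D, dotl P z Y) (annot P z Y ++ rest)).
Proof.
move=> LY cY; have mem := gtree_mem_dotl (fun E z HL => (LY E z HL).1) cY.
move=> D0 z0; elim=> {D0 z0} [D z /LY [[-> _] //]|D z w HP|D E F z HP GE [w1 D1] GF [w2 D2]|
        D E f z HP GE [w1 D1]|D f E z HP GE [w1 D1]].
- exists w; apply: derives1.
  have := @stepT _ _ _ (Pbar P) [::] [::] (D, dotl P z Y) w (annot P z Y ++ rest).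
  by rewrite cats0; apply; split => //; apply/mem/gtree_T/HP.
- exists (w1 ++ w2); rewrite map_cat.
  apply: der_step (derives_cat D1 D2 (u1 := [:: _]) (u2 := [:: _])).
  apply: (@stepB _ _ _ (Pbar P) [::] [::] (D, _) (E, _) (F, _)).
  by do 3 split => //; split; [apply/mem/(gtree_B HP GE GF) | split; apply: mem].
- exists w1; apply: der_step D1.
  apply: (@stepPush _ _ _ (Pbar P) [::] [::] (D, _) (E, dotl P (f :: z) Y) (f, _)).
  by do 3 split => //; split; [apply/mem/(gtree_push HP GE) | apply: (mem _ _ GE)].
- exists w1; apply: der_step D1.
  apply: (@stepPop _ _ _ (Pbar P) [::] [::] (D, dotl P (f :: z) Y) (E, _) (f, _)).
  by do 3 split => //; split; [apply: (mem _ _ (gtree_pop HP GE)) | apply: mem].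
Qed.

Definition annotated (Xb : {set N}) (t : asym) : Prop :=
  if t is STerm (D, Y) s then
    exists z, [/\ Y = dotl P z Xb, s = annot P z Xb & D \in Y]
  else True.

Lemma annotated_step Xb (u v : seq asym) : step (Pbar P) u v ->
  List.Forall (annotated Xb) u -> List.Forall (annotated Xb) v.
Proof.
case=> [u0 v0 [A XA] [B XB] [C XC] z|u0 v0 [A XA] [B XB] [f Xf] z|
         u0 v0 [A XA] [B XB] [f Xf] z|u0 v0 [A XA] w z] /= HP
  /List.Forall_app [Fu0 /List.Forall_cons_iff [[zA [EA Ez HA]] Fv0]];
  apply/List.Forall_app; split => //.
- case: HP => -> [-> [_ [_ [HB HC]]]].
  by constructor; [exists zA | constructor; [exists zA |]].
- case: HP => -> [-> [_ [_ HB]]]; constructor => //.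
  by exists (f :: zA); rewrite /= -EA -Ez.
- case: HP => -> [_ [_ [_ HB]]]; case: zA EA Ez => // h zA _ [_ EXf ->].
  by constructor => //; exists zA; rewrite -EXf.
- by apply/List.Forall_app; split => //; elim: w {HP} => //= *; constructor.
Qed.

Lemma annotated_derives Xb (u v : seq asym) : derives (Pbar P) u v ->
  List.Forall (annotated Xb) u -> List.Forall (annotated Xb) v.
Proof. by elim=> // a b c /annotated_step Hab _ IH /(Hab Xb) /IH. Qed.

Definition productive_base (Y : {set N}) (rest : seq (I * {set N})) :=
  dot_closed P Y /\ forall E, E \in Y -> productive (STerm (E, Y) rest).

Lemma productive_base_dotl Y rest z :
  productive_base Y rest -> productive_base (dotl P z Y) (annot P z Y ++ rest).
Proof.
move=> [cY pY]; split; first exact: dot_closed_dotl.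
move=> E /dotl_gtree; apply: (gtree_productive _ cY) => E' z' [-> HE'].
by split => //; apply: pY.
Qed.

Lemma derives_productive Y rest C (v : seq asym) :
  productive_base Y rest -> C \in Y ->
  derives (Pbar P) [:: STerm (C, Y) [::]] v -> List.Forall productive (lift rest v).
Proof.
move=> bY HC /(annotated_derives (Xb := Y)) Av.
have {Av} : List.Forall (annotated Y) v by apply: Av; constructor => //; exists [::].
elim=> [|t {}v At _ IH]; constructor => //.
case: t At => [[D YD] s [z [/= -> -> HD]]|a _].
- by have [_] := productive_base_dotl z bY; apply.
- exact: productive_letter.
Qed.

Lemma productive_base_Useful : productive_base (UsefulSet P) [::].
Proof.
split=> [|E]; first exact: dot_closed_Useful.
rewrite inE => /pbP [w Dw].
have G : List.Forall (term_gtree P (fun _ _ => False)) [:: STerm E [::]].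
  by apply: derives_gtree Dw _; elim: w => //= *; constructor.
exact: (gtree_productive (rest := [::]) _ (@dot_closed_Useful _ _ _ P) (List.Forall_inv G)).
Qed.

Lemma reachable_productive_base S B X zbar : Useful P S ->
  reachable P S (STerm (B, X) zbar) -> productive_base X zbar.
Proof.
move=> HS [u [v Dr]].
have AS : List.Forall (annotated (UsefulSet P)) [:: STerm (S, UsefulSet P) [::]].
  by constructor => //; exists [::]; split => //; rewrite inE; apply/pbP.
have /List.Forall_app [_ At] := annotated_derives Dr AS.
have [z [-> -> _]] := List.Forall_inv At.
by have := productive_base_dotl z productive_base_Useful; rewrite cats0.
Qed.

End AnnotatedGrammar.

Section StackMonoid.
Variables (N T I : finType) (P : prod N T I -> Prop) (alpha beta : I -> N).
Hypothesis push_occurs : forall f : I, exists A B : N, P (PPush A B f).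
Hypothesis push_alpha_beta :
  forall (A B : N) (f : I), P (PPush A B f) -> A = alpha f /\ B = beta f.
Local Notation phi := (phi P alpha beta).

Lemma phi_cons a s : phi (a :: s) = mmul P (phi1 P alpha beta a) (phi s).
Proof. by []. Qed.

Lemma phi_eq1 s : phi s = @MOne N -> s = [::].
Proof.
case: s => // a s; rewrite phi_cons /=.
by case: (phi s) => //= B1 Y1 M1 A1 X1; case: ifP.
Qed.

Lemma phi_annot s B Y M A X : phi s = MElt B Y M A X ->
  s = annot P (map fst s) X /\ Y = dotl P (map fst s) X.
Proof.
elim: s B Y M A X => // [[f Xf] s IH] B Y M A X; rewrite phi_cons /=.
case Es: (phi s) => [||B1 Y1 M1 A1 X1] //=; first by case=> _ <- _ _ <-; rewrite (phi_eq1 Es).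
case: ifP => // /andP [/eqP EX _] [_ <- _ _ <-].
by have [E1 E2] := IH _ _ _ _ _ Es; rewrite EX -E2 {1}E1.
Qed.

Lemma push_step f (Xf : {set N}) z : alpha f \in Xf -> beta f \in dotX P [:: f] Xf ->
  step (Pbar P) [:: STerm (alpha f, Xf) z]
                [:: STerm (beta f, dotX P [:: f] Xf) ((f, Xf) :: z)].
Proof.
move=> Ha Hb; apply: (@stepPush _ _ _ (Pbar P) [::] [::]); do 2 split => //.
by split; [have [A [B /[dup] HP /push_alpha_beta [<- <-]]] := push_occurs f | split].
Qed.

Lemma Rrel_embeds X B A rest : productive_base P X rest -> Rrel P X B A ->
  embeds (Pbar P) (STerm (B, X) rest) (STerm (A, X) rest).
Proof.
move=> bX [HB [_ [u [v Duv]]]].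
have := derives_productive bX HB Duv.
rewrite /lift map_cat => /List.Forall_app [Pu /List.Forall_cons_iff [_ Pv]].
exists (lift rest u), (lift rest v); split => //.
by have := derives_lift rest Duv; rewrite /lift map_cat.
Qed.

(* Each letter [(f, _)] of [s] is produced by the push [alpha f -> beta f f]; the
   relations [R] required by [phi s <> 0] connect consecutive letters. *)
Lemma phi_embeds rest s B Y M A X : phi s = MElt B Y M A X ->
  B \in Y -> A \in X -> productive_base P X rest ->
  embeds (Pbar P) (STerm (A, X) rest) (STerm (B, Y) (s ++ rest)).
Proof.
elim: s B Y M A X => // [[f Xf] s IH] B Y M A X; rewrite phi_cons /=.
case Es: (phi s) => [||B1 Y1 M1 A1 X1] //=.
  by case=> <- <- _ <- <- HB HA _; rewrite (phi_eq1 Es); apply/embeds_step/push_step.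
case: ifP => // /andP [/eqP EX /pbP RBA] [<- <- _ <- <- HB HA bX].
have [Es' EY1] := phi_annot Es.
have bXf : productive_base P Xf (s ++ rest).
  by have := productive_base_dotl (map fst s) bX; rewrite -Es' -EY1 -EX.
have [HB1 [Ha _]] := RBA.
apply: embeds_trans (IH _ _ _ _ _ Es _ HA bX) _; first by rewrite -EX.
rewrite -EX; apply: embeds_trans (Rrel_embeds bXf RBA) _.
exact/embeds_step/push_step.
Qed.

End StackMonoid.

Theorem mainTheorem13 (N T I : finType) (S : N) (P : prod N T I -> Prop)
  (alpha beta : I -> N)
  (Pfin : exists s : list (prod N T I), forall p, P p <-> List.In p s)
  (HS : Useful P S)
  (Hocc : forall f : I, exists A B : N, P (PPush A B f))
  (Hab : forall (A B : N) (f : I), P (PPush A B f) -> A = alpha f /\ B = beta f)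
  (B A : N) (X : {set N}) (M : bmat N)
  (Hid : mon_idem P (MElt B X M A X))
  (Hne : MElt B X M A X <> @MZero N /\ MElt B X M A X <> @MOne N)
  (zbar ze : seq (I * {set N}))
  (Hreach : reachable P S (STerm (B, X) zbar))
  (Hze : phi P alpha beta ze = MElt B X M A X) :
  forall w : seq T, Lang P [:: STerm (B, X) (ze ++ zbar)] w ->
    exists2 w' : seq T, Lang P [:: STerm (B, X) zbar] w' & subseq w w'.
Proof.
move: Hid; rewrite /mon_idem /= eqxx /=; case: pbP => // RBA _.
have [HB [HA _]] := RBA.
have bX := reachable_productive_base HS Hreach.
move=> w; apply: embeds_subseq; apply: embeds_trans (Rrel_embeds bX RBA) _.
exact: (phi_embeds Hocc Hab Hze HB HA bX).
Qed.
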